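(* Under the Standing Setting, the iterates of D$^4$L satisfy $\lim_{\nu\to\infty}\|\mathbf D^\nu-\mathbf 1\otimes\overline{\mathbf D}_{\boldsymbol\phi^\nu}\|_F=0$, $\sum_{t=1}^{\infty}\|\mathbf D^t-\mathbf 1\otimes\overline{\mathbf D}_{\boldsymbol\phi^t}\|_F^2<\infty$, and $\sum_{t=1}^{\infty}\|\mathbf U^t-\mathbf 1\otimes\overline{\mathbf U}_{\boldsymbol\phi^t}\|_F^2<\infty$.
   Context: Problem (P). Fix positive integers $I,M,K,n_1,\dots,n_I$. Variables: $\mathbf D\in\mathbb R^{M\times K}$ and $\mathbf X_i\in\mathbb R^{K\times n_i}$, $\mathbf X=[\mathbf X_1,\dots,\mathbf X_I]$. Problem (P) is: minimize $U(\mathbf D,\mathbf X)=F(\mathbf D,\mathbf X)+\sum_{i=1}^I g_i(\mathbf X_i)+G(\mathbf D)$, where $F(\mathbf D,\mathbf X)=\sum_{i=1}^I f_i(\mathbf D,\mathbf X_i)$, subject to $\mathbf D\in\mathcal D$, $\mathbf X_i\in\mathcal X_i$, $i=1,\dots,I$. Notation: $\langle\mathbf A,\mathbf B\rangle=\mathrm{tr}(\mathbf A^\top\mathbf B)$, $\|\cdot\|_F$ is the Frobenius norm; $\nabla_D$, $\nabla_{X_i}$ denote partial gradients arranged as matrices of the shapes of $\mathbf D$, $\mathbf X_i$. Assumption (A): (A1) each $f_i:\mathcal O\times\mathcal O_i\to\mathbb R$ is $C^2$, bounded below, and biconvex (convex in $\mathbf D$ for fixed $\mathbf X_i$ and convex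 in $\mathbf X_i$ for fixed $\mathbf D$), where $\mathcal O\supseteq\mathcal D$, $\mathcal O_i\supseteq\mathcal X_i$ are open convex sets; (A2) for every $\mathbf D\in\mathcal D$, $\nabla_{X_i}f_i(\mathbf D,\cdot)$ is Lipschitz on $\mathcal X_i$ with constant $L_{\nabla X_i}(\mathbf D)$, and $L_{\nabla X_i}:\mathcal D\to\mathbb R$ is continuous; (A3) $\mathcal D$ is nonempty, compact and convex, and each $\mathcal X_i$ is nonempty, closed and convex; (A4) $G:\mathcal O\to\mathbb R$ is convex (possibly nonsmooth); (A5) for each $i$, either (i) $\mathcal X_i$ is compact and $g_i:\mathcal O_i\to\mathbb R$ is convex, or (ii) $g_i$ is $\mu_i$-strongly convex ($\mu_i>0$). Network: at each time $\nu\in\mathbb N_+$ there is a digraph $\mathcal G^\nu=(\{1,\dots,I\},\mathcal E^\nu)$; $(j,i)\in\mathcal E^\nu$ means a link from $j$ to $i$; $\mathcal N_i^{\rm in}[\nu]=\{j:(j,i)\in\mathcal E^\nu\}\cup\{i\}$. B-strong connectivity: there is an integer $B>0$ such that for all $k\ge0$ the digraph with edge set $\bigcup_{t=kB}^{(k+1)B-1}\mathcal E^t$ is strongly connected. Weights: matrices $\mathbf A^\nu=(a^\nu_{ij})\in\mathbb R^{I\times I}$ with, for some $\kappa>0$, $a^\nu_{ii}\ge\kappa$; $a^\nu_{ij}\ge\kappa$ if $(j,i)\in\mathcal E^\nu$ and $a^\nu_{ij}=0$ otherwise ($j\ne i$); and $\mathbf 1^\top\mathbf A^\nu=\mathbf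 1^\top$. D$^4$L algorithm. Initialize $\phi_i^0=1$, $\mathbf D^0_{(i)}\in\mathcal D$, $\mathbf X_i^0\in\mathcal X_i$, $\boldsymbol\Theta^0_{(i)}=\nabla_Df_i(\mathbf D^0_{(i)},\mathbf X^0_i)$. For $\nu=0,1,\dots$, each agent $i$ computes $\widetilde{\mathbf D}^\nu_{(i)}=\arg\min_{\mathbf D\in\mathcal D}\ \tilde f_i(\mathbf D;\mathbf D^\nu_{(i)},\mathbf X^\nu_i)+\langle I\boldsymbol\Theta^\nu_{(i)}-\nabla_Df_i(\mathbf D^\nu_{(i)},\mathbf X^\nu_i),\mathbf D-\mathbf D^\nu_{(i)}\rangle+G(\mathbf D)$; $\mathbf U^\nu_{(i)}=\mathbf D^\nu_{(i)}+\gamma^\nu(\widetilde{\mathbf D}^\nu_{(i)}-\mathbf D^\nu_{(i)})$; $\mathbf X_i^{\nu+1}=\arg\min_{\mathbf X_i\in\mathcal X_i}\ \tilde h_i(\mathbf X_i;\mathbf U^\nu_{(i)},\mathbf X^\nu_i)+g_i(\mathbf X_i)$; $\phi_i^{\nu+1}=\sum_{j\in\mathcal N_i^{\rm in}[\nu]}a^\nu_{ij}\phi^\nu_j$; $\mathbf D^{\nu+1}_{(i)}=\frac{1}{\phi_i^{\nu+1}}\sum_{j\in\mathcal N_i^{\rm in}[\nu]}a^\nu_{ij}\phi^\nu_j\mathbf U^\nu_{(j)}$; $\boldsymbol\Theta^{\nu+1}_{(i)}=\frac{1}{\phi_i^{\nu+1}}\sum_{j\in\mathcal N_i^{\rm in}[\nu]}a^\nu_{ij}\phi^\nu_j\boldsymbol\Theta^\nu_{(j)}+\frac{1}{\phi_i^{\nu+1}}\big(\nabla_Df_i(\mathbf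 D^{\nu+1}_{(i)},\mathbf X^{\nu+1}_i)-\nabla_Df_i(\mathbf D^{\nu}_{(i)},\mathbf X^{\nu}_i)\big)$. Assumption (S) (surrogates): for each $i$, $\tilde f_i(\mathbf D;\mathbf D^\nu_{(i)},\mathbf X^\nu_i)$ is either $f_i(\mathbf D,\mathbf X^\nu_i)+\frac{\tau^\nu_{D,i}}2\|\mathbf D-\mathbf D^\nu_{(i)}\|_F^2$ or $\langle\nabla_Df_i(\mathbf D^\nu_{(i)},\mathbf X^\nu_i),\mathbf D-\mathbf D^\nu_{(i)}\rangle+\frac{\tau^\nu_{D,i}}2\|\mathbf D-\mathbf D^\nu_{(i)}\|_F^2$; and $\tilde h_i(\mathbf X_i;\mathbf U^\nu_{(i)},\mathbf X^\nu_i)$ is either $f_i(\mathbf U^\nu_{(i)},\mathbf X_i)+\frac{\tau^\nu_{X,i}}2\|\mathbf X_i-\mathbf X^\nu_i\|_F^2$ or $\langle\nabla_{X_i}f_i(\mathbf U^\nu_{(i)},\mathbf X^\nu_i),\mathbf X_i-\mathbf X^\nu_i\rangle+\frac{\tau^\nu_{X,i}}2\|\mathbf X_i-\mathbf X^\nu_i\|_F^2$, with $\tau^\nu_{D,i},\tau^\nu_{X,i}>0$. Assumption (T1): for all $i$, $0<\inf_\nu\tau^\nu_{D,i}\le\sup_\nu\tau^\nu_{D,i}<\infty$, $\sup_\nu\tau^\nu_{X,i}<\infty$, and $\tau^\nu_{X,i}\ge\frac12L_{\nabla X_i}(\mathbf U^\nu_{(i)})+\epsilon$ for all $\nu\ge1$,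 for a fixed $\epsilon>0$. Step-size assumption: $\gamma^\nu\in(0,1]$, $\sum_\nu\gamma^\nu=\infty$, $\sum_\nu(\gamma^\nu)^2<\infty$. Standing Setting: Assumption (A), B-strong connectivity, the weight conditions above, Assumption (S), Assumption (T1), and the step-size assumption. Notation: $\mathbf D^\nu\in\mathbb R^{MI\times K}$ and $\mathbf U^\nu\in\mathbb R^{MI\times K}$ are the vertical stacks of $\mathbf D^\nu_{(1)},\dots,\mathbf D^\nu_{(I)}$ and of $\mathbf U^\nu_{(1)},\dots,\mathbf U^\nu_{(I)}$; $\mathbf 1\otimes\mathbf Y$ is the vertical stack of $I$ copies of $\mathbf Y$; weighted averages $\overline{\mathbf D}_{\boldsymbol\phi^\nu}=\frac1I\sum_{i=1}^I\phi_i^\nu\mathbf D^\nu_{(i)}$ and $\overline{\mathbf U}_{\boldsymbol\phi^\nu}=\frac1I\sum_{i=1}^I\phi_i^\nu\mathbf U^\nu_{(i)}$. *)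

From Stdlib Require Import Reals Relations.
From mathcomp Require Import all_boot.
Set Implicit Arguments. Unset Strict Implicit. Unset Printing Implicit Defensive.
Open Scope R_scope.

Notation Mat m n := (('I_m * 'I_n)%type -> R).

Definition ip {T : finType} (x y : T -> R) : R :=
  \big[Rplus/R0]_(t : T) (x t * y t).
Definition nrm {T : finType} (x : T -> R) : R := sqrt (ip x x).
Definition vadd {T : Type} (x y : T -> R) : T -> R := fun t => x t + y t.
Definition vsub {T : Type} (x y : T -> R) : T -> R := fun t => x t - y t.
Definition vscal {T : Type} (a : R) (x : T -> R) : T -> R := fun t => a * x t.
Definition vsum {J : finType} {T : Type} (P : pred J) (F : J -> T -> R) : T -> R :=
  fun t => \big[Rplus/R0]_(j | P j) F j t.

Definition vopen_set {T : finType} (S : (T -> R) -> Prop) : Prop :=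
  forall x, S x -> exists e, 0 < e /\ forall y, nrm (vsub y x) < e -> S y.
Definition vclosed_set {T : finType} (S : (T -> R) -> Prop) : Prop :=
  vopen_set (fun x => ~ S x).
Definition vcompact_set {T : finType} (S : (T -> R) -> Prop) : Prop :=
  forall (Idx : Type) (Uc : Idx -> (T -> R) -> Prop),
    (forall k, vopen_set (Uc k)) ->
    (forall x, S x -> exists k, Uc k x) ->
    exists l : list Idx, forall x, S x -> exists k, List.In k l /\ Uc k x.
Definition vconvex_set {T : Type} (S : (T -> R) -> Prop) : Prop :=
  forall x y t, S x -> S y -> 0 <= t <= 1 ->
    S (vadd (vscal t x) (vscal (1 - t) y)).
Definition convex_on {T : Type} (S : (T -> R) -> Prop) (h : (T -> R) -> R) : Prop :=
  forall x y t, S x -> S y -> 0 <= t <= 1 ->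
    h (vadd (vscal t x) (vscal (1 - t) y)) <= t * h x + (1 - t) * h y.
Definition strongly_convex_on {T : finType} (S : (T -> R) -> Prop) (mu : R)
    (h : (T -> R) -> R) : Prop :=
  forall x y t, S x -> S y -> 0 <= t <= 1 ->
    h (vadd (vscal t x) (vscal (1 - t) y))
      <= t * h x + (1 - t) * h y - mu / 2 * t * (1 - t) * (nrm (vsub x y)) ^ 2.
Definition cont_on {T : finType} (S : (T -> R) -> Prop) (h : (T -> R) -> R) : Prop :=
  forall x, S x -> forall e, 0 < e -> exists d, 0 < d /\
    forall y, S y -> nrm (vsub y x) < d -> Rabs (h y - h x) < e.

Definition upd {T : eqType} (x : T -> R) (t : T) (s : R) : T -> R :=
  fun u => if u == t then s else x u.
Definition has_partial {T : eqType} (F : (T -> R) -> R) (x : T -> R) (t : T) (l : R) : Prop :=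
  derivable_pt_lim (fun s => F (upd x t s)) (x t) l.
Definition C2_on {T : finType} (S : (T -> R) -> Prop) (F : (T -> R) -> R) : Prop :=
  exists (d1 : T -> (T -> R) -> R) (d2 : T -> T -> (T -> R) -> R),
    (forall x, S x -> forall t, has_partial F x t (d1 t x)) /\
    (forall x, S x -> forall t u, has_partial (d1 t) x u (d2 t u x)) /\
    (forall t, cont_on S (d1 t)) /\
    (forall t u, cont_on S (d2 t u)).

(* joint variable (D, X) as a single vector indexed by a sum type *)
Definition lpart {T1 T2 : finType} (z : (T1 + T2)%type -> R) : T1 -> R := fun t => z (inl t).
Definition rpart {T1 T2 : finType} (z : (T1 + T2)%type -> R) : T2 -> R := fun t => z (inr t).
Definition joint {T1 T2 : finType} (F : (T1 -> R) -> (T2 -> R) -> R)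
  : ((T1 + T2)%type -> R) -> R := fun z => F (lpart z) (rpart z).

Definition is_argmin {T : Type} (S : (T -> R) -> Prop) (obj : (T -> R) -> R) (x : T -> R) : Prop :=
  S x /\ forall y, S y -> obj x <= obj y.

Definition strongly_connected {N : Type} (e : N -> N -> Prop) : Prop :=
  forall u v, clos_refl_trans N e u v.

(* vertical stack of the I blocks Ds 1, ..., Ds I (each M x K): an (MI) x K matrix
   whose rows are indexed by pairs (i, m) (block i, row m within the block) *)
Definition stack {I M K : nat} (Ds : 'I_I -> Mat M K) : (('I_I * 'I_M) * 'I_K)%type -> R :=
  fun p => Ds p.1.1 (p.1.2, p.2).
(* 1 (x) Y : I stacked copies of Y *)
Definition kron1 {I M K : nat} (Y : Mat M K) : (('I_I * 'I_M) * 'I_K)%type -> R :=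
  stack (fun _ : 'I_I => Y).
Definition wavg {I : nat} {T : Type} (phi : 'I_I -> R) (Ds : 'I_I -> T -> R) : T -> R :=
  vscal (/ INR I) (vsum predT (fun j => vscal (phi j) (Ds j))).

(* Fix an entry p of the dictionaries. The local iterates stay in the compact set 𝒟,
   so U = D + γ(D̃ - D) moves every entry by at most 2Cγ^ν, and D^{ν+1} is a push-sum
   average of the U^ν. Over every window of I·B steps B-strong connectivity lets each
   agent receive a κ^{IB} share of every other agent's mass, while the push-sum weights φ
   stay in [κ^{IB}, I]; hence the spread max_i D_(i) p - min_i D_(i) p contracts by a fixed
   factor 1 - η, up to an error proportional to the step sizes of the window. A
   contraction perturbed by a square-summable sequence is square-summable, and the
   disagreement ‖D^ν - 1⊗D̄_φ‖ is bounded by the spread, which gives all three claims. *)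

From HB Require Import structures.
From Stdlib Require Import Reals Relations Lra Lia.
From mathcomp Require Import all_boot zify boolp.
Set Implicit Arguments.
Unset Strict Implicit.
Unset Printing Implicit Defensive.
Open Scope R_scope.

Lemma Rplus_associative : associative Rplus.
Proof. by move=> x y z; rewrite Rplus_assoc. Qed.

HB.instance Definition _ :=
  Monoid.isComLaw.Build R 0 Rplus Rplus_associative Rplus_comm Rplus_0_l.

(* [/=] is needed to expose [Rplus] after bigop rewrites; it must not unfold [x ^ 2]
   into a product that [lra] would treat as a new atom. *)
Arguments pow : simpl never.

Lemma Rle_addr_ge0 (x y : R) : 0 <= y -> x <= x + y.
Proof. lra. Qed.

Lemma Rle_addl_ge0 (x y : R) : 0 <= y -> x <= y + x.
Proof. lra. Qed.

Lemma Rabs_le_between (x b : R) : Rabs x <= b -> - b <= x <= b.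
Proof.
by move=> xb; split; [have := Rle_abs (- x); rewrite Rabs_Ropp | have := Rle_abs x]; lra.
Qed.

Lemma ratio_lower_bound (lo hi x a b z : R) :
  0 < lo -> lo <= x <= hi -> 0 <= a -> 0 <= b -> a - b <= z -> a / hi - b / lo <= z / x.
Proof.
move=> lo0 [lox xhi] a0 b0 abz.
have ahi : a / hi <= a / x by apply: Rmult_le_compat_l => //; apply: Rinv_le_contravar; lra.
have blo : b / x <= b / lo by apply: Rmult_le_compat_l => //; apply: Rinv_le_contravar; lra.
have : (a - b) / x <= z / x by apply: Rmult_le_compat_r => //; apply/Rlt_le/Rinv_0_lt_compat; lra.
have -> : (a - b) / x = a / x - b / x by field; lra.
lra.
Qed.

Lemma INR_ord_gt0 (n : nat) (i : 'I_n) : 0 < INR n.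
Proof. by apply: lt_0_INR; case: i => k; lia. Qed.

Section RealSums.

Context {T : Type} (r : seq T) (P : pred T).

Lemma Rsum_le (F G : T -> R) :
  (forall t, P t -> F t <= G t) ->
  \big[Rplus/0]_(t <- r | P t) F t <= \big[Rplus/0]_(t <- r | P t) G t.
Proof. by move=> FG; apply: (big_ind2 (fun x y => x <= y)) => *; lra || exact: FG. Qed.

Lemma Rsum_ge0 (F : T -> R) :
  (forall t, P t -> 0 <= F t) -> 0 <= \big[Rplus/0]_(t <- r | P t) F t.
Proof. by move=> F0; apply: (big_ind (fun x => 0 <= x)) => *; lra || exact: F0. Qed.

Lemma Rsum_mull (c : R) (F : T -> R) :
  \big[Rplus/0]_(t <- r | P t) (c * F t) = c * \big[Rplus/0]_(t <- r | P t) F t.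
Proof. by apply: (big_rec2 (fun x y => x = c * y)) => [|t x y _ ->]; ring. Qed.

Lemma Rabs_sum_le (F : T -> R) :
  Rabs (\big[Rplus/0]_(t <- r | P t) F t) <= \big[Rplus/0]_(t <- r | P t) Rabs (F t).
Proof.
apply: (big_rec2 (fun x y => Rabs x <= y)) => [|t x y _ h]; first by rewrite Rabs_R0; lra.
by apply: Rle_trans (Rabs_triang _ _) _; lra.
Qed.

End RealSums.

Lemma Rsum_const (T : finType) (c : R) : \big[Rplus/0]_(t : T) c = INR #|T| * c.
Proof. by rewrite big_const; elim: #|T| => [|k IH]; rewrite ?S_INR /= ?IH; ring. Qed.

Lemma Rsum_const_nat (a b : nat) (c : R) :
  \big[Rplus/0]_(a <= t < b) c = INR (b - a) * c.
Proof. by rewrite big_const_nat; elim: (b - a)%nat => [|k IH]; rewrite ?S_INR /= ?IH; ring. Qed.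

Lemma Rsum_ge_term (T : finType) (F : T -> R) (i : T) :
  (forall j, 0 <= F j) -> F i <= \big[Rplus/0]_j F j.
Proof.
by move=> F0; rewrite (bigD1 i) //=; apply/Rle_addr_ge0/Rsum_ge0 => j _.
Qed.

Lemma sum_f_R0_big (u : nat -> R) (N : nat) :
  sum_f_R0 u N = \big[Rplus/0]_(0 <= t < N.+1) u t.
Proof. by elim: N => [|N IH]; rewrite ?big_nat1 // big_nat_recr //= -IH. Qed.

Lemma Rsum_nat_shift (F : nat -> R) (a N : nat) :
  \big[Rplus/0]_(a <= t < a + N) F t = \big[Rplus/0]_(0 <= t < N) F (t + a)%nat.
Proof. by rewrite -{1}[a]add0n big_addn addKn. Qed.

Lemma Rsum_shift_le (u : nat -> R) (bnd : R) (s N : nat) :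
  (forall t, 0 <= u t) -> (forall N, \big[Rplus/0]_(0 <= t < N) u t <= bnd) ->
  \big[Rplus/0]_(0 <= t < N) u (t + s)%nat <= bnd.
Proof.
move=> u0 ub; apply: Rle_trans (ub (N + s)%nat).
rewrite addnC -Rsum_nat_shift [X in _ <= X](big_cat_nat _ (n := s)) ?leq_addr //=.
by apply/Rle_addl_ge0/Rsum_ge0 => t _.
Qed.

(** * Perturbed contractions are square-summable *)

Lemma sqr_Rsum_le (x : nat -> R) (L : nat) :
  (\big[Rplus/0]_(0 <= r < L) x r) ^ 2 <= INR L * \big[Rplus/0]_(0 <= r < L) x r ^ 2.
Proof.
elim: L => [|L IH]; first by rewrite !big_nil /=; lra.
rewrite !big_nat_recr // S_INR /=.
set S := \big[Rplus/0]_(0 <= r < L) x r in IH *.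
set Q := \big[Rplus/0]_(0 <= r < L) x r ^ 2 in IH *.
have Q0 : 0 <= Q by apply: Rsum_ge0 => r _; apply: pow2_ge_0.
have L0 := pos_INR L.
have cross : 2 * S * x L <= Q + INR L * x L ^ 2.
  have : 0 <= INR L * (Q + INR L * x L ^ 2 - 2 * S * x L).
    by have := pow2_ge_0 (S - INR L * x L); nra.
  move: IH; case: (Req_dec (INR L) 0) => [->|LN0] IH h; first nra.
  by apply: (Rmult_le_reg_l (INR L)); nra.
nra.
Qed.

(* Young's inequality with weight (1 - rho) / 2 keeps the coefficient of [a ^ 2] below 1. *)
Lemma sqr_contraction_le (rho a b : R) : 0 <= rho < 1 ->
  (rho * a + b) ^ 2 <= rho * (1 + rho) / 2 * a ^ 2 + (1 + 2 * rho / (1 - rho)) * b ^ 2.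
Proof.
move=> [rho0 rho1].
have -> : rho * (1 + rho) / 2 * a ^ 2 + (1 + 2 * rho / (1 - rho)) * b ^ 2
   = (rho * a + b) ^ 2 + rho / (2 * (1 - rho)) * ((1 - rho) * a - 2 * b) ^ 2.
  by field; lra.
have : 0 <= rho / (2 * (1 - rho)).
  by apply: Rmult_le_pos; [lra | apply/Rlt_le/Rinv_0_lt_compat; lra].
by have := pow2_ge_0 ((1 - rho) * a - 2 * b); nra.
Qed.

Section PerturbedContraction.

Variables (s g : nat -> R) (L : nat) (rho K0 C0 Gsq : R).
Hypothesis rho01 : 0 <= rho < 1.
Hypotheses (s_bounded : forall t, 0 <= s t <= C0) (g_ge0 : forall t, 0 <= g t).
Hypothesis g_sq_summable : forall N, \big[Rplus/0]_(0 <= t < N) g t ^ 2 <= Gsq.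
Hypothesis s_contracts : forall t,
  s (t + L)%nat <= rho * s t + K0 * \big[Rplus/0]_(0 <= r < L) g (t + r)%nat.

Let q := rho * (1 + rho) / 2.
Let c := 1 + 2 * rho / (1 - rho).

Let c_ge0 : 0 <= c.
Proof.
have : 0 <= 2 * rho / (1 - rho).
  by apply: Rmult_le_pos; [lra | apply/Rlt_le/Rinv_0_lt_compat; lra].
rewrite /c; lra.
Qed.

Let sqr_contracts t : s (t + L)%nat ^ 2 <=
  q * s t ^ 2 + c * K0 ^ 2 * INR L * \big[Rplus/0]_(0 <= r < L) g (t + r)%nat ^ 2.
Proof.
set W := \big[Rplus/0]_(0 <= r < L) g (t + r)%nat.
have W0 : 0 <= W by apply: Rsum_ge0 => r _.
have CS : W ^ 2 <= INR L * \big[Rplus/0]_(0 <= r < L) g (t + r)%nat ^ 2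
  := sqr_Rsum_le (fun r => g (t + r)%nat) L.
have sq : s (t + L)%nat ^ 2 <= (rho * s t + K0 * W) ^ 2.
  by apply: pow_incr; split; [exact: (proj1 (s_bounded _)) | exact: s_contracts].
apply: Rle_trans sq _; apply: Rle_trans (sqr_contraction_le (s t) (K0 * W) rho01) _.
have cK : 0 <= c * K0 ^ 2 by have := pow2_ge_0 K0; nra.
by have := Rmult_le_compat_l _ _ _ cK CS; rewrite -/q -/c; nra.
Qed.

Let window_sums_le N :
  \big[Rplus/0]_(0 <= t < N) \big[Rplus/0]_(0 <= r < L) g (t + r)%nat ^ 2 <= INR L * Gsq.
Proof.
rewrite exchange_big -{2}(subn0 L) -Rsum_const_nat; apply: Rsum_le => r _.
by apply: (@Rsum_shift_le (fun t => g t ^ 2)) => // t; apply: pow2_ge_0.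
Qed.

(* The partial sums P of [s ^ 2] satisfy P (N + L) <= K + q P N with q < 1, and P is
   nondecreasing. *)
Lemma perturbed_contraction_sq_summable :
  exists bnd, forall N, \big[Rplus/0]_(0 <= t < N) s t ^ 2 <= bnd.
Proof.
pose Ps N := \big[Rplus/0]_(0 <= t < N) s t ^ 2.
have q1 : 0 <= q < 1 by rewrite /q; split; nra.
pose K := INR L * C0 ^ 2 + c * K0 ^ 2 * INR L * (INR L * Gsq).
have Ps_mono N : Ps N <= Ps (N + L)%nat.
  rewrite /Ps [X in _ <= X](big_cat_nat _ (n := N)) ?leq_addr //=.
  by apply/Rle_addr_ge0/Rsum_ge0 => t _; apply: pow2_ge_0.
have Ps_shift N : Ps (N + L)%nat <= K + q * Ps N.
  rewrite /Ps addnC (big_cat_nat _ (n := L)) ?leq_addr //=.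
  rewrite Rsum_nat_shift.
  have head : \big[Rplus/0]_(0 <= t < L) s t ^ 2 <= INR L * C0 ^ 2.
    rewrite -{2}(subn0 L) -Rsum_const_nat; apply: Rsum_le => t _.
    by apply: pow_incr; apply: s_bounded.
  have tail := @Rsum_le _ (index_iota 0 N) xpredT _ _ (fun t _ => sqr_contracts t).
  rewrite big_split /= !Rsum_mull in tail.
  have := window_sums_le N.
  have : 0 <= c * K0 ^ 2 * INR L.
    apply: Rmult_le_pos; last exact: pos_INR.
    by apply: Rmult_le_pos; [exact: c_ge0 | exact: pow2_ge_0].
  rewrite /K; nra.
exists (K / (1 - q)) => N.
apply: (Rmult_le_reg_l (1 - q)); first lra.
have -> : (1 - q) * (K / (1 - q)) = K by field; lra.
by have := Ps_mono N; have := Ps_shift N; rewrite /Ps; lra.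
Qed.

End PerturbedContraction.

Lemma Un_cv_sum_of_bounded (a : nat -> R) (bnd : R) :
  (forall t, 0 <= a t) -> (forall N, \big[Rplus/0]_(0 <= t < N) a t <= bnd) ->
  exists l, Un_cv (fun N => sum_f_R0 a N) l.
Proof.
move=> a0 ab; have [l al] : {l | Un_cv (sum_f_R0 a) l}.
  apply: growing_cv => [n | ]; first by rewrite /= ; have := a0 n.+1; lra.
  by exists bnd => _ [N ->]; rewrite sum_f_R0_big.
by exists l.
Qed.

Lemma Rsum_le_Un_cv_lim (a : nat -> R) (l : R) :
  (forall t, 0 <= a t) -> Un_cv (fun N => sum_f_R0 a N) l ->
  forall N, \big[Rplus/0]_(0 <= t < N) a t <= l.
Proof.
move=> a0 al [|N]; last by rewrite -sum_f_R0_big; apply: sum_incr.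
by rewrite big_nil; have := sum_incr a 0%nat l al a0; have := a0 0%nat; rewrite /=; lra.
Qed.

Lemma Un_cv0_of_sq_summable (f : nat -> R) : (forall t, 0 <= f t) ->
  (exists l, Un_cv (fun N => sum_f_R0 (fun t => f t.+1 ^ 2) N) l) -> Un_cv f 0.
Proof.
move=> f0 [l fl] eps eps0.
have [N HN] := cv_cauchy_1 _ (exist _ l fl) _ (pow_lt _ 2 eps0).
exists N.+2 => [[|[|m]] mN]; try lia.
have /HN : (m.+1 >= N)%coq_nat by lia.
move/(_ m (ltac:(lia))); rewrite /R_dist /Rdist /= Rminus_0_r.
have -> : sum_f_R0 (fun t => f t.+1 ^ 2) m + f m.+2 ^ 2 - sum_f_R0 (fun t => f t.+1 ^ 2) m
  = f m.+2 ^ 2 by ring.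
rewrite !Rabs_pos_eq ?f0 //; last exact: pow2_ge_0.
by move=> sq; apply: Rnot_le_lt => epsf; have := f0 m.+2; nra.
Qed.

Lemma Rargmax_seq {T : eqType} (F : T -> R) (x0 : T) (r : seq T) :
  {i | forall j, j \in r -> F j <= F i}.
Proof.
elim: r => [|a r [i Fi]]; first by exists x0.
case: (Rle_dec (F a) (F i)) => Fai; [exists i | exists a] => j;
  by rewrite inE => /predU1P [-> | /Fi]; lra.
Qed.

Lemma Rargmax {T : finType} (F : T -> R) (x0 : T) : {i | forall j, F j <= F i}.
Proof. by have [i Fi] := Rargmax_seq F x0 (enum T); exists i => j; apply: Fi; rewrite mem_enum. Qed.

Lemma Rargmin {T : finType} (F : T -> R) (x0 : T) : {i | forall j, F i <= F j}.
Proof. by have [i Fi] := Rargmax (fun t => - F t) x0; exists i => j; have := Fi j; lra. Qed.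

Lemma Rabs_coord_le_nrm {T : finType} (x : T -> R) (p : T) : Rabs (x p) <= nrm x.
Proof.
rewrite /nrm -(sqrt_square (Rabs (x p))); last exact: Rabs_pos.
apply: sqrt_le_1_alt.
rewrite -Rabs_mult Rabs_pos_eq; last by apply: Rle_0_sqr.
by apply: (Rsum_ge_term p (fun t => Rle_0_sqr (x t))).
Qed.

Lemma In_leq_foldr_maxn (l : list nat) (k : nat) : List.In k l -> (k <= foldr maxn 0%nat l)%nat.
Proof. by elim: l => [|a l IH] //= [-> | /IH]; lia. Qed.

Lemma vcompact_coord_bounded {T : finType} (S : (T -> R) -> Prop) (p0 : T) :
  vcompact_set S -> exists C, forall x p, S x -> Rabs (x p) <= C.
Proof.
move=> Scomp; pose box (k : nat) (x : T -> R) := forall p, Rabs (x p) < INR k + 1.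
have box_open k : vopen_set (box k).
  move=> x xk; have [q xq] := Rargmax (fun p => Rabs (x p)) p0.
  exists (INR k + 1 - Rabs (x q)); split=> [|y yx p]; first by have := xk q; lra.
  have : Rabs (y p - x p) <= nrm (vsub y x) := Rabs_coord_le_nrm (vsub y x) p.
  by have := Rabs_triang_inv (y p) (x p); have := xq p; lra.
have box_cover x : S x -> exists k, box k x.
  move=> _; have [q xq] := Rargmax (fun p => Rabs (x p)) p0.
  have [n xn] := INR_archimed 1 (Rabs (x q)) Rlt_0_1.
  by exists n => p; have := xq p; lra.
have [l lcover] := Scomp nat box box_open box_cover.
exists (INR (foldr maxn 0%nat l) + 1) => x p Sx.
have [k [kl xk]] := lcover x Sx.
by have := le_INR _ _ (elimT leP (In_leq_foldr_maxn kl)); have := xk p; lra.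
Qed.

Lemma wavg_coord_between {I : nat} {T : Type} (w : 'I_I -> R) (x : 'I_I -> T -> R) t lo hi :
  (forall j, 0 <= w j) -> \big[Rplus/0]_j w j = INR I -> 0 < INR I ->
  (forall j, lo <= x j t <= hi) -> lo <= wavg w x t <= hi.
Proof.
move=> w0 wI I0 xlh; rewrite /wavg /vscal /vsum.
set S := \big[Rplus/0]_j _.
have [loS Shi] : INR I * lo <= S <= INR I * hi.
  rewrite -wI Rmult_comm -Rsum_mull [_ * hi]Rmult_comm -Rsum_mull.
  by split; apply: Rsum_le => j _; have := xlh j; have := w0 j; nra.
have -> : / INR I * S = S / INR I by rewrite Rmult_comm.
have e : INR I * (S / INR I) = S by field; lra.
by split; apply: (Rmult_le_reg_l (INR I)); rewrite ?e; lra.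
Qed.

Lemma disagreement_sq_le {I M K : nat} (Ds : 'I_I -> Mat M K) (w : 'I_I -> R) (b : R) :
  (forall j, 0 <= w j) -> \big[Rplus/0]_j w j = INR I -> 0 < INR I ->
  (forall pp, exists lo hi, hi - lo <= b /\ forall j, lo <= Ds j pp <= hi) ->
  nrm (vsub (stack Ds) (kron1 (wavg w Ds))) ^ 2
    <= INR #|{: ('I_I * 'I_M) * 'I_K}| * b ^ 2.
Proof.
move=> w0 wI I0 Dlh.
rewrite /nrm pow2_sqrt; last by apply: Rsum_ge0 => q _; apply: Rle_0_sqr.
rewrite -Rsum_const; apply: Rsum_le => q _.
have [lo [hi [width Dq]]] := Dlh (q.1.2, q.2).
have avg := @wavg_coord_between _ _ w Ds (q.1.2, q.2) lo hi w0 wI I0 Dq.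
have Dq1 := Dq q.1.1.
have -> : vsub (stack Ds) (kron1 (wavg w Ds)) q = Ds q.1.1 (q.1.2, q.2) - wavg w Ds (q.1.2, q.2).
  by [].
set x := Ds _ _ - _; have [xlo xhi] : - b <= x <= b by rewrite /x; lra.
have : 0 <= (b - x) * (b + x) by apply: Rmult_le_pos; lra.
nra.
Qed.

Lemma clos_refl_trans_crossing {T : Type} (rel : T -> T -> Prop) (P : T -> Prop) x y :
  clos_refl_trans T rel x y -> P x -> ~ P y -> exists u v, [/\ P u, ~ P v & rel u v].
Proof.
move/clos_rt_rt1n_iff; elim=> [//|a b c ab _ IH] Pa nPc.
by case: (pselect (P b)) => [Pb|nPb]; [exact: IH | exists a, b].
Qed.

(** * Push-sum mixing over a B-strongly connected network *)

Section Network.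

Variables (I : nat) (E : nat -> 'I_I -> 'I_I -> bool) (A : nat -> 'I_I -> 'I_I -> R).
Variable kappa : R.
Hypothesis Hkappa : 0 < kappa.
Hypothesis HAdiag : forall nu i, kappa <= A nu i i.
Hypothesis HAedge : forall nu i j, j <> i -> E nu j i -> kappa <= A nu i j.
Hypothesis HAnon : forall nu i j, j <> i -> ~ E nu j i -> A nu i j = 0.
Hypothesis HAcol : forall nu j, \big[Rplus/R0]_(i : 'I_I) A nu i j = 1.

Definition mix (nu : nat) (y : 'I_I -> R) (i : 'I_I) : R :=
  \big[Rplus/0]_(j | E nu j i || (j == i)) (A nu i j * y j).

Lemma A_ge0 nu i j : 0 <= A nu i j.
Proof.
have := Hkappa; case: (eqVneq j i) => [-> | /eqP ji]; first by have := HAdiag nu i; lra.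
case: (boolP (E nu j i)) => [e | /negP e]; first by have := HAedge ji e; lra.
by rewrite (HAnon ji e); lra.
Qed.

Lemma mixE nu y i : mix nu y i = \big[Rplus/0]_j (A nu i j * y j).
Proof.
rewrite /mix big_mkcond; apply: eq_bigr => j _; case: ifP => // /negbT.
by rewrite negb_or => /andP [/negP e /eqP ji]; rewrite HAnon //; ring.
Qed.

Lemma eq_mix nu (y z : 'I_I -> R) i : (forall l, y l = z l) -> mix nu y i = mix nu z i.
Proof. by move=> yz; apply: eq_bigr => j _; rewrite yz. Qed.

Lemma mix_lin nu y z a b i :
  mix nu (fun l => a * y l + b * z l) i = a * mix nu y i + b * mix nu z i.
Proof. by rewrite !mixE -!Rsum_mull -big_split; apply: eq_bigr => j _ /=; ring. Qed.

Lemma mixZ nu a y i : mix nu (fun l => a * y l) i = a * mix nu y i.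
Proof. by rewrite !mixE -Rsum_mull; apply: eq_bigr => j _; ring. Qed.

Lemma mix_le nu (y z : 'I_I -> R) i : (forall l, y l <= z l) -> mix nu y i <= mix nu z i.
Proof.
by move=> yz; apply: Rsum_le => j _; apply: Rmult_le_compat_l; [exact: A_ge0 | exact: yz].
Qed.

Lemma mix_ge0 nu y i : (forall l, 0 <= y l) -> 0 <= mix nu y i.
Proof. by move=> y0; apply: Rsum_ge0 => j _; apply: Rmult_le_pos; [exact: A_ge0 | exact: y0]. Qed.

Lemma sum_mix nu y : \big[Rplus/0]_i mix nu y i = \big[Rplus/0]_j y j.
Proof.
under eq_bigr do rewrite mixE.
rewrite exchange_big; apply: eq_bigr => j _.
by under eq_bigr do rewrite Rmult_comm; rewrite Rsum_mull HAcol; ring.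
Qed.

Lemma sum_abs_mix_le nu y :
  \big[Rplus/0]_i Rabs (mix nu y i) <= \big[Rplus/0]_j Rabs (y j).
Proof.
rewrite -(sum_mix nu (fun l => Rabs (y l))); apply: Rsum_le => i _; rewrite !mixE.
apply: Rle_trans (Rabs_sum_le _ _ _) _; apply: Rsum_le => j _.
by rewrite Rabs_mult Rabs_pos_eq; [lra | exact: A_ge0].
Qed.

Lemma mix_ge_weight nu y i u : (forall l, 0 <= y l) -> E nu u i || (u == i) ->
  kappa * y u <= mix nu y i.
Proof.
move=> y0 ui; rewrite /mix (bigD1 u) //=.
have kA : kappa <= A nu i u.
  case: (eqVneq u i) => [-> | /eqP iu]; first exact: HAdiag.
  by move: ui; rewrite (introF eqP iu) orbF; apply: HAedge iu.
rewrite -[kappa * y u]Rplus_0_r; apply: Rplus_le_compat.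
  by apply: Rmult_le_compat_r; [exact: y0 | exact: kA].
by apply: Rsum_ge0 => j _; apply: Rmult_le_pos; [exact: A_ge0 | exact: y0].
Qed.

Lemma kappa_le1 (i : 'I_I) : kappa <= 1.
Proof.
rewrite -(HAcol 0 i) (bigD1 i) //= -[kappa]Rplus_0_r.
by apply: Rplus_le_compat; [exact: HAdiag | apply: Rsum_ge0 => j _; apply: A_ge0].
Qed.

Fixpoint mix_iter (s k : nat) (y : 'I_I -> R) : 'I_I -> R :=
  if k is k'.+1 then mix (s + k') (mix_iter s k' y) else y.

Lemma mix_iter_ge0 s k y : (forall l, 0 <= y l) -> forall i, 0 <= mix_iter s k y i.
Proof. by move=> y0; elim: k => [|k IH] i //=; apply: mix_ge0. Qed.

Definition reaches (s k : nat) (j i : 'I_I) : Prop :=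
  forall y, (forall l, 0 <= y l) -> kappa ^ k * y j <= mix_iter s k y i.

Lemma reaches_refl s j : reaches s 0 j j.
Proof. by move=> y _ /=; lra. Qed.

Lemma reaches_step s k j u i :
  reaches s k j u -> E (s + k) u i || (u == i) -> reaches s k.+1 j i.
Proof.
move=> ju ui y y0 /=; rewrite -tech_pow_Rmult.
have := mix_ge_weight (mix_iter_ge0 s k y0) ui; have := ju y y0; have := Hkappa; nra.
Qed.

Lemma reaches_mono s k k' j i : (k <= k')%nat -> reaches s k j i -> reaches s k' j i.
Proof.
move=> /subnK <-; elim: (k' - k)%nat => [|d IH] // ji; rewrite addSn.
by apply: reaches_step (IH ji) _; rewrite eqxx orbT.
Qed.

Variable B : nat.
Hypothesis HB : (0 < B)%nat.
Hypothesis HBconn : forall k : nat, strongly_connected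
  (fun u v : 'I_I => exists t : nat, (k * B <= t)%nat /\ (t <= (k + 1) * B - 1)%nat /\ E t u v).

Definition reached (s k : nat) (j : 'I_I) : {set 'I_I} := [set l | `[< reaches s k j l >]].

Lemma reached_start s k j : j \in reached s k j.
Proof. by rewrite inE; apply/asboolP; apply: (reaches_mono (leq0n k)); apply: reaches_refl. Qed.

(* Some edge of the window leaves the reached set; its head becomes reached. *)
Lemma reached_window_proper s j w : (s <= w * B)%nat -> reached s (w * B - s) j != setT ->
  reached s (w * B - s) j \proper reached s (w.+1 * B - s) j.
Proof.
move=> sw; rewrite eqEsubset subsetT andTb => /subsetPn [l _ nl].
have [u [v [ju nv [t [wt [tw uv]]]]]] := clos_refl_trans_crossing
  (P := fun x => x \in reached s (w * B - s) j) (HBconn w j l) (reached_start _ _ _) (negP nl).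
rewrite inE in ju; move/asboolP: ju => ju; apply/properP; split.
  apply/subsetP => x; rewrite !inE => /asboolP jx; apply/asboolP.
  by apply: reaches_mono jx; rewrite mulSn; lia.
exists v; last exact/negP.
rewrite inE; apply/asboolP.
have ju' : reaches s (t - s) j u by apply: reaches_mono ju; lia.
have uv' : E (s + (t - s)) u v || (u == v) by rewrite subnKC ?uv //; lia.
by apply: reaches_mono (reaches_step ju' uv'); rewrite mulSn; lia.
Qed.

Lemma card_reached_ge s j w0 m : (s <= w0 * B)%nat ->
  (minn m.+1 I <= #|reached s ((w0 + m) * B - s) j|)%nat.
Proof.
move=> sw0; elim: m => [|m IH].
  have : (0 < #|reached s ((w0 + 0) * B - s) j|)%nat.
    by apply/card_gt0P; exists j; apply: reached_start.
  by lia.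
rewrite addnS; case: (eqVneq (reached s ((w0 + m) * B - s) j) setT) => [full | notfull].
  have : reached s ((w0 + m).+1 * B - s) j = setT.
    apply/eqP; rewrite eqEsubset subsetT -full; apply/subsetP => x; rewrite !inE.
    by move/asboolP => jx; apply/asboolP; apply: reaches_mono jx; rewrite mulSn; lia.
  by move->; rewrite cardsT card_ord; lia.
have sB : (s <= (w0 + m) * B)%nat by rewrite mulnDl; lia.
by have := proper_card (reached_window_proper sB notfull); lia.
Qed.

Lemma reaches_all s j i : reaches s (I * B) j i.
Proof.
have I0 : (0 < I)%nat by case: i => [k]; lia.
pose w0 := (s %/ B).+1.
have w0B : (s < w0 * B <= s + B)%nat.
  by have := leq_divM s B; have := ltn_ceil s HB; rewrite /w0 mulSn; lia.
have full : reached s ((w0 + I.-1) * B - s) j = setT.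
  apply/eqP; rewrite eqEcard subsetT cardsT card_ord.
  by have := card_reached_ge j I.-1 (ltnW (proj1 (andP w0B))); lia.
have : i \in reached s ((w0 + I.-1) * B - s) j by rewrite full inE.
by rewrite inE => /asboolP; apply: reaches_mono; rewrite mulnDl; nia.
Qed.


Variable phi : nat -> 'I_I -> R.
Hypothesis Hphi0 : forall i, phi 0 i = 1.
Hypothesis Hphi : forall nu i, phi nu.+1 i =
  \big[Rplus/R0]_(j | E nu j i || (j == i)) (A nu i j * phi nu j).

Lemma phiS nu i : phi nu.+1 i = mix nu (phi nu) i.
Proof. exact: Hphi. Qed.

Lemma phi_ge0 nu i : 0 <= phi nu i.
Proof. by elim: nu i => [|nu IH] i; rewrite ?Hphi0 ?phiS; [lra | apply: mix_ge0]. Qed.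

Lemma sum_phi nu : \big[Rplus/0]_i phi nu i = INR I.
Proof.
elim: nu => [|nu IH]; last by under eq_bigr do rewrite phiS; rewrite sum_mix.
by under eq_bigr do rewrite Hphi0; rewrite Rsum_const card_ord; ring.
Qed.

Lemma phi_le_I nu i : phi nu i <= INR I.
Proof. by rewrite -(sum_phi nu); apply: Rsum_ge_term => j; apply: phi_ge0. Qed.

Lemma phi_iter s k i : phi (s + k) i = mix_iter s k (phi s) i.
Proof. by elim: k i => [|k IH] i; rewrite ?addn0 // addnS phiS /=; apply: eq_mix. Qed.

(* Some agent has weight at least 1, and its mass reaches every agent in I * B steps. *)
Lemma phi_ge nu i : kappa ^ (I * B) <= phi nu i.
Proof.
have k1 := kappa_le1 i; have kpos k : 0 <= kappa ^ k by apply: pow_le; lra.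
case: (leqP (I * B) nu) => [IBnu | nuIB].
  have [j Fj] := Rargmax (phi (nu - I * B)) i.
  have phij : 1 <= phi (nu - I * B) j.
    have : \big[Rplus/0]_l phi (nu - I * B) l <= \big[Rplus/0]_(l : 'I_I) phi (nu - I * B) j.
      by apply: Rsum_le => l _; apply: Fj.
    by rewrite sum_phi Rsum_const card_ord; have := INR_ord_gt0 i; nra.
  have := reaches_all (nu - I * B) j i (phi_ge0 (nu - I * B)).
  by rewrite -phi_iter subnK //; have := kpos (I * B)%nat; nra.
have := reaches_mono (leq0n nu) (reaches_refl 0 i) (phi_ge0 0).
rewrite -phi_iter add0n Hphi0 Rmult_1_r.
apply: Rle_trans; rewrite -(subnK (ltnW nuIB)) pow_add.
have : kappa ^ (I * B - nu) <= 1 by rewrite -(pow1 (I * B - nu)); apply: pow_incr; lra.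
by have := kpos nu; nra.
Qed.

Lemma phi_gt0 nu i : 0 < phi nu i.
Proof. by apply: Rlt_le_trans (phi_ge nu i); apply: pow_lt. Qed.

Section PerturbedConsensus.

Variables (d u : nat -> 'I_I -> R) (gam : nat -> R) (Kc : R).
Hypothesis Hd : forall nu i, phi nu.+1 i * d nu.+1 i = mix nu (fun j => phi nu j * u nu j) i.
Hypothesis Hud : forall nu j, Rabs (u nu j - d nu j) <= Kc * gam nu.

Lemma weighted_gap_step nu c i :
  phi nu.+1 i * (d nu.+1 i - c) =
  mix nu (fun j => phi nu j * (d nu j - c) + phi nu j * (u nu j - d nu j)) i.
Proof.
have -> : phi nu.+1 i * (d nu.+1 i - c) = phi nu.+1 i * d nu.+1 i + - c * phi nu.+1 i by ring.
rewrite Hd phiS -[mix _ _ _]Rmult_1_l -(mix_lin nu _ (phi nu) 1 (- c) i).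
by apply: eq_mix => j; ring.
Qed.

Lemma sum_weighted_perturbation_le nu :
  \big[Rplus/0]_j Rabs (phi nu j * (u nu j - d nu j)) <= INR I * INR I * Kc * gam nu.
Proof.
apply: Rle_trans (_ : \big[Rplus/0]_(j : 'I_I) (INR I * (Kc * gam nu)) <= _).
  apply: Rsum_le => j _; rewrite Rabs_mult [Rabs (phi _ _)]Rabs_pos_eq; last exact: phi_ge0.
  by apply: Rmult_le_compat; [apply: phi_ge0 | apply: Rabs_pos | apply: phi_le_I | apply: Hud].
by rewrite Rsum_const card_ord; lra.
Qed.

Lemma weighted_gap_deviation s c k :
  \big[Rplus/0]_l Rabs (phi (s + k) l * (d (s + k) l - c)
                        - mix_iter s k (fun j => phi s j * (d s j - c)) l)
  <= INR I * INR I * Kc * \big[Rplus/0]_(0 <= r < k) gam (s + r)%nat.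
Proof.
elim: k => [|k IH].
  rewrite big_nil Rmult_0_r; under eq_bigr do rewrite addn0 Rminus_diag Rabs_R0.
  by rewrite Rsum_const; lra.
rewrite big_nat_recr //= Rmult_plus_distr_l.
set zeta := mix_iter s k _ in IH *.
have -> : \big[Rplus/0]_l Rabs (phi (s + k.+1) l * (d (s + k.+1) l - c) - mix (s + k) zeta l)
  = \big[Rplus/0]_l Rabs (mix (s + k) (fun j => 1 * (phi (s + k) j * (d (s + k) j - c)
      + phi (s + k) j * (u (s + k) j - d (s + k) j)) + -1 * zeta j) l).
  by apply: eq_bigr => l _; rewrite mix_lin addnS weighted_gap_step; congr Rabs; ring.
apply: Rle_trans (sum_abs_mix_le _ _) _.
apply: Rle_trans (_ : \big[Rplus/0]_l (Rabs (phi (s + k) l * (d (s + k) l - c) - zeta l)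
  + Rabs (phi (s + k) l * (u (s + k) l - d (s + k) l))) <= _).
  apply: Rsum_le => l _; apply: Rle_trans (Rabs_triang _ _); apply: Req_le.
  by congr Rabs; ring.
rewrite big_split /=; apply: Rplus_le_compat; [exact: IH | exact: sum_weighted_perturbation_le].
Qed.

(* The weighted gaps [phi (d - c)] evolve by mixing, up to the perturbations
   [phi (u - d)]; after I * B steps every agent holds a [kappa ^ (I * B)] share of the
   gap of agent [jx]. *)
Lemma consensus_lower_bound s c jx i : (forall j, c <= d s j) ->
  kappa ^ (I * B) * kappa ^ (I * B) / INR I * (d s jx - c)
  - INR I * INR I * Kc / kappa ^ (I * B) * \big[Rplus/0]_(0 <= r < I * B) gam (s + r)%nat
  <= d (s + I * B) i - c.
Proof.
move=> cd; set L := (I * B)%nat; set delta := kappa ^ L.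
set W := \big[Rplus/0]_(0 <= r < L) gam (s + r)%nat.
have delta0 : 0 < delta by apply: pow_lt.
have dev := weighted_gap_deviation s c L; rewrite -/W in dev.
set z0 := (fun j => phi s j * (d s j - c)) in dev.
have P0 : 0 <= INR I * INR I * Kc * W.
  by apply: Rle_trans dev; apply: Rsum_ge0 => l _; apply: Rabs_pos.
have devi := Rle_trans _ _ _ (Rsum_ge_term i (fun l => Rabs_pos _)) dev.
have z0_ge0 j : 0 <= z0 j by apply: Rmult_le_pos; [apply: phi_ge0 | have := cd j; lra].
have a0 : 0 <= delta * delta * (d s jx - c).
  by apply: Rmult_le_pos; [apply: Rmult_le_pos | have := cd jx]; lra.
have reach : delta * delta * (d s jx - c) <= mix_iter s L z0 i.
  apply: Rle_trans (reaches_all s jx i z0_ge0); rewrite Rmult_assoc.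
  apply: Rmult_le_compat_l; first lra.
  by apply: Rmult_le_compat_r; [have := cd jx | apply: phi_ge]; lra.
have zL : delta * delta * (d s jx - c) - INR I * INR I * Kc * W
          <= phi (s + L) i * (d (s + L) i - c).
  by move/Rabs_le_between: devi; lra.
have := ratio_lower_bound delta0 (conj (phi_ge (s + L) i) (phi_le_I (s + L) i)) a0 P0 zL.
have -> : phi (s + L) i * (d (s + L) i - c) / phi (s + L) i = d (s + L) i - c.
  by field; have := phi_gt0 (s + L) i; lra.
by apply: Rle_trans; apply: Req_le; field; have := phi_le_I s i; have := phi_gt0 s i; lra.
Qed.

End PerturbedConsensus.

Lemma consensus_spread_contracts (d u : nat -> 'I_I -> R) (gam : nat -> R) (Kc : R) :
  (forall nu i, phi nu.+1 i * d nu.+1 i = mix nu (fun j => phi nu j * u nu j) i) ->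
  (forall nu j, Rabs (u nu j - d nu j) <= Kc * gam nu) ->
  forall s ia ib, (forall j, d s ib <= d s j <= d s ia) -> forall i i',
  d (s + I * B)%nat i - d (s + I * B)%nat i' <=
    (1 - kappa ^ (I * B) * kappa ^ (I * B) / INR I) * (d s ia - d s ib)
    + 2 * (INR I * INR I * Kc / kappa ^ (I * B)) *
      \big[Rplus/0]_(0 <= r < I * B) gam (s + r)%nat.
Proof.
move=> Hd Hud s ia ib dab i i'.
have lo := consensus_lower_bound Hd Hud ia i' (fun j => proj1 (dab j)).
have Hd' nu l : phi nu.+1 l * - d nu.+1 l = mix nu (fun j => phi nu j * - u nu j) l.
  have -> : mix nu (fun j => phi nu j * - u nu j) l = mix nu (fun j => -1 * (phi nu j * u nu j)) l.
    by apply: eq_mix => j; ring.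
  by rewrite mixZ -Hd; ring.
have Hud' nu j : Rabs (- u nu j - - d nu j) <= Kc * gam nu.
  by rewrite -Rabs_Ropp; have -> : - (- u nu j - - d nu j) = u nu j - d nu j by ring.
have hi := consensus_lower_bound (d := fun nu j => - d nu j) Hd' Hud' ib i
  (fun j => Ropp_le_contravar _ _ (proj2 (dab j))).
have eta0 : 0 <= kappa ^ (I * B) * kappa ^ (I * B) / INR I.
  apply/Rlt_le/Rdiv_lt_0_compat; last exact: INR_ord_gt0 i.
  by apply: Rmult_lt_0_compat; apply: pow_lt.
by rewrite /= in hi; have := dab ia; nra.
Qed.

Lemma pushsum_between nu i (x : R) (y : 'I_I -> R) lo hi :
  phi nu.+1 i * x = mix nu (fun j => phi nu j * y j) i ->
  (forall j, lo <= y j <= hi) -> lo <= x <= hi.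
Proof.
move=> xy ylh; have phi0 := phi_gt0 nu.+1 i.
have lo_mix : lo * phi nu.+1 i <= mix nu (fun j => phi nu j * y j) i.
  rewrite phiS -mixZ.
  by apply: mix_le => j; have := ylh j; have := phi_ge0 nu j; nra.
have mix_hi : mix nu (fun j => phi nu j * y j) i <= hi * phi nu.+1 i.
  rewrite phiS -mixZ.
  by apply: mix_le => j; have := ylh j; have := phi_ge0 nu j; nra.
by rewrite -xy in lo_mix mix_hi; split; nra.
Qed.

(** * Consensus of the D4L dictionaries *)

Section DictionaryConsensus.

Variables (M K : nat) (i0 : 'I_I) (C : R) (gamma : nat -> R).
Variables (D Dt U : nat -> 'I_I -> Mat M K).
Hypothesis Hgamma : forall nu, 0 < gamma nu <= 1.
Hypothesis Hgsq : exists l, Un_cv (fun N => sum_f_R0 (fun k => gamma k ^ 2) N) l.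
Hypothesis HD0 : forall i p, Rabs (D 0 i p) <= C.
Hypothesis HDt : forall nu i p, Rabs (Dt nu i p) <= C.
Hypothesis HU : forall nu i, U nu i = vadd (D nu i) (vscal (gamma nu) (vsub (Dt nu i) (D nu i))).
Hypothesis HD : forall nu i, D nu.+1 i =
  vscal (/ phi nu.+1 i)
    (vsum (fun j => E nu j i || (j == i)) (fun j => vscal (A nu i j * phi nu j) (U nu j))).

Lemma D_pushsum nu i p : phi nu.+1 i * D nu.+1 i p = mix nu (fun j => phi nu j * U nu j p) i.
Proof.
rewrite HD /vscal /vsum -Rmult_assoc Rinv_r ?Rmult_1_l; last by have := phi_gt0 nu.+1 i; lra.
by apply: eq_bigr => j _; ring.
Qed.

Lemma D_bounded nu i p : Rabs (D nu i p) <= C.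
Proof.
elim: nu i => [|nu IH] i; first exact: HD0.
apply: Rabs_le; apply: (pushsum_between (D_pushsum nu i p)) => j.
rewrite HU /vadd /vscal /vsub.
have := Rabs_le_between (IH j); have := Rabs_le_between (HDt nu j p); have := Hgamma nu.
by nra.
Qed.

Lemma U_sub_D_le nu j p : Rabs (U nu j p - D nu j p) <= 2 * C * gamma nu.
Proof.
rewrite HU /vadd /vscal /vsub.
have -> : D nu j p + gamma nu * (Dt nu j p - D nu j p) - D nu j p
          = gamma nu * (Dt nu j p - D nu j p) by ring.
rewrite Rabs_mult (Rabs_pos_eq (gamma nu)); last by have := Hgamma nu; lra.
have : Rabs (Dt nu j p - D nu j p) <= 2 * C.
  have := Rabs_le_between (D_bounded nu j p); have := Rabs_le_between (HDt nu j p).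
  by move=> *; apply: Rabs_le; lra.
by have := Hgamma nu; nra.
Qed.

Let imax nu p := sval (Rargmax (fun i => D nu i p) i0).
Let imin nu p := sval (Rargmin (fun i => D nu i p) i0).

Lemma D_between nu p j : D nu (imin nu p) p <= D nu j p <= D nu (imax nu p) p.
Proof.
split; first exact: (svalP (Rargmin (fun i => D nu i p) i0) j).
exact: (svalP (Rargmax (fun i => D nu i p) i0) j).
Qed.

Let spread nu := \big[Rplus/0]_(p : 'I_M * 'I_K) (D nu (imax nu p) p - D nu (imin nu p) p).
Let NP := INR #|{: 'I_M * 'I_K}|.

Lemma spread_bounds nu : 0 <= spread nu <= NP * (2 * C).
Proof.
rewrite /NP -Rsum_const; split; [apply: Rsum_ge0 | apply: Rsum_le] => p _.
  by have := D_between nu p (imin nu p); lra.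
have := Rabs_le_between (D_bounded nu (imax nu p) p).
by have := Rabs_le_between (D_bounded nu (imin nu p) p); lra.
Qed.

Lemma spread_contracts t :
  spread (t + I * B) <= (1 - kappa ^ (I * B) * kappa ^ (I * B) / INR I) * spread t
    + NP * (2 * (INR I * INR I * (2 * C) / kappa ^ (I * B)))
      * \big[Rplus/0]_(0 <= r < I * B) gamma (t + r)%nat.
Proof.
set eta := kappa ^ (I * B) * kappa ^ (I * B) / INR I.
set Kp := INR I * INR I * (2 * C) / kappa ^ (I * B).
set W := \big[Rplus/0]_(0 <= r < I * B) gamma (t + r)%nat.
apply: Rle_trans (_ : \big[Rplus/0]_(p : 'I_M * 'I_K)
  ((1 - eta) * (D t (imax t p) p - D t (imin t p) p) + 2 * Kp * W) <= _).
  apply: Rsum_le => p _.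
  exact: (consensus_spread_contracts (fun nu i => D_pushsum nu i p)
    (fun nu j => U_sub_D_le nu j p) (D_between t p)).
by rewrite big_split /= Rsum_mull Rsum_const -Rmult_assoc; apply: Req_le.
Qed.

Lemma spread_sq_summable :
  exists bnd, forall N, \big[Rplus/0]_(0 <= t < N) spread t ^ 2 <= bnd.
Proof.
have [lg glg] := Hgsq.
have I1 : 1 <= INR I by change 1 with (INR 1); apply: le_INR; case: i0 => k /leP; lia.
have delta0 : 0 < kappa ^ (I * B) by apply: pow_lt.
have delta1 : kappa ^ (I * B) <= 1.
  by rewrite -(pow1 (I * B)); apply: pow_incr; have := kappa_le1 i0; lra.
have eta01 : 0 < kappa ^ (I * B) * kappa ^ (I * B) / INR I <= 1.
  split; first by apply: Rdiv_lt_0_compat; nra.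
  by apply: (Rmult_le_reg_r (INR I)); [lra | rewrite /Rdiv Rmult_assoc Rinv_l; nra].
apply: (perturbed_contraction_sq_summable _ spread_bounds _
  (Rsum_le_Un_cv_lim (fun t => pow2_ge_0 _) glg) spread_contracts); first lra.
by move=> t; have := Hgamma t; lra.
Qed.

Let NQ := INR #|{: ('I_I * 'I_M) * 'I_K}|.

Lemma D_disagreement_sq_le nu :
  nrm (vsub (stack (D nu)) (kron1 (wavg (phi nu) (D nu)))) ^ 2 <= NQ * spread nu ^ 2.
Proof.
apply: disagreement_sq_le (phi_ge0 nu) (sum_phi nu) (INR_ord_gt0 i0) _ => p.
exists (D nu (imin nu p) p), (D nu (imax nu p) p); split; last exact: D_between.
apply: (Rsum_ge_term p (fun q => _)) => q.
by have := D_between nu q (imin nu q); lra.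
Qed.

Lemma U_disagreement_sq_le nu :
  nrm (vsub (stack (U nu)) (kron1 (wavg (phi nu) (U nu)))) ^ 2
    <= NQ * (spread nu + 2 * (2 * C * gamma nu)) ^ 2.
Proof.
apply: disagreement_sq_le (phi_ge0 nu) (sum_phi nu) (INR_ord_gt0 i0) _ => p.
exists (D nu (imin nu p) p - 2 * C * gamma nu), (D nu (imax nu p) p + 2 * C * gamma nu).
split=> [|j].
  have : D nu (imax nu p) p - D nu (imin nu p) p <= spread nu.
    apply: (Rsum_ge_term p (fun q => _)) => q.
    by have := D_between nu q (imin nu q); lra.
  lra.
have := Rabs_le_between (U_sub_D_le nu j p); have := D_between nu p j; lra.
Qed.

Lemma shifted_sq_summable (a : nat -> R) bnd :
  (forall N, \big[Rplus/0]_(0 <= t < N) a t ^ 2 <= bnd) ->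
  forall N, \big[Rplus/0]_(0 <= t < N) a t.+1 ^ 2 <= bnd.
Proof.
move=> ab N; under eq_bigr do rewrite -addn1.
exact: (Rsum_shift_le (u := fun t => a t ^ 2)) (fun t => pow2_ge_0 _) ab.
Qed.

Theorem dictionary_consensus :
  Un_cv (fun nu => nrm (vsub (stack (D nu)) (kron1 (wavg (phi nu) (D nu))))) 0
  /\ (exists l, Un_cv (fun N => sum_f_R0 (fun t =>
        nrm (vsub (stack (D t.+1)) (kron1 (wavg (phi t.+1) (D t.+1)))) ^ 2) N) l)
  /\ (exists l, Un_cv (fun N => sum_f_R0 (fun t =>
        nrm (vsub (stack (U t.+1)) (kron1 (wavg (phi t.+1) (U t.+1)))) ^ 2) N) l).
Proof.
have [bnd /shifted_sq_summable spread_bnd] := spread_sq_summable.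
have [lg /(Rsum_le_Un_cv_lim (fun t => pow2_ge_0 _)) /shifted_sq_summable gamma_bnd] := Hgsq.
have NQ0 : 0 <= NQ by apply: pos_INR.
have D_summable : exists l, Un_cv (fun N => sum_f_R0 (fun t =>
    nrm (vsub (stack (D t.+1)) (kron1 (wavg (phi t.+1) (D t.+1)))) ^ 2) N) l.
  apply: (@Un_cv_sum_of_bounded _ (NQ * bnd)) => [t | N]; first exact: pow2_ge_0.
  apply: Rle_trans (_ : \big[Rplus/0]_(0 <= t < N) (NQ * spread t.+1 ^ 2) <= _).
    by apply: Rsum_le => t _; apply: D_disagreement_sq_le.
  by rewrite Rsum_mull; apply: Rmult_le_compat_l.
split; last split => //.
  by apply: Un_cv0_of_sq_summable D_summable => t; apply: sqrt_pos.
apply: (@Un_cv_sum_of_bounded _ (NQ * (2 * bnd + 32 * C ^ 2 * lg))) => [t | N].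
  exact: pow2_ge_0.
apply: Rle_trans (_ : \big[Rplus/0]_(0 <= t < N)
  (NQ * (2 * spread t.+1 ^ 2 + 32 * C ^ 2 * gamma t.+1 ^ 2)) <= _).
  apply: Rsum_le => t _; apply: Rle_trans (U_disagreement_sq_le t.+1) _.
  apply: Rmult_le_compat_l => //.
  by have := pow2_ge_0 (spread t.+1 - 2 * (2 * C * gamma t.+1)); nra.
rewrite Rsum_mull big_split /= !Rsum_mull; apply: Rmult_le_compat_l => //.
by have := spread_bnd N; have := gamma_bnd N; have := pow2_ge_0 C; nra.
Qed.

End DictionaryConsensus.

End Network.

Theorem mainTheorem3
  (I M K : nat) (n : 'I_I -> nat)
  (HI : (0 < I)%nat) (HM : (0 < M)%nat) (HK : (0 < K)%nat) (Hn : forall i, (0 < n i)%nat)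
  (f : forall i : 'I_I, Mat M K -> Mat K (n i) -> R)
  (gradD : forall i : 'I_I, Mat M K -> Mat K (n i) -> Mat M K)
  (gradX : forall i : 'I_I, Mat M K -> Mat K (n i) -> Mat K (n i))
  (g : forall i : 'I_I, Mat K (n i) -> R) (G : Mat M K -> R)
  (Oset : Mat M K -> Prop) (Oi : forall i : 'I_I, Mat K (n i) -> Prop)
  (Dset : Mat M K -> Prop) (Xset : forall i : 'I_I, Mat K (n i) -> Prop)
  (LX : 'I_I -> Mat M K -> R)
  (* (A1) *)
  (HOopen : vopen_set Oset) (HOconv : vconvex_set Oset)
  (HOiopen : forall i, vopen_set (Oi i)) (HOiconv : forall i, vconvex_set (Oi i))
  (HfC2 : forall i, C2_on (fun z => Oset (lpart z) /\ Oi i (rpart z)) (joint (f i)))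
  (HgradD : forall i D X, Oset D -> Oi i X -> forall p,
      has_partial (fun D' => f i D' X) D p (gradD i D X p))
  (HgradX : forall i D X, Oset D -> Oi i X -> forall q,
      has_partial (fun X' => f i D X') X q (gradX i D X q))
  (Hfbdd : forall i, exists c, forall D X, Oset D -> Oi i X -> c <= f i D X)
  (HfconvD : forall i X, Oi i X -> convex_on Oset (fun D => f i D X))
  (HfconvX : forall i D, Oset D -> convex_on (Oi i) (f i D))
  (* (A2) *)
  (HLip : forall i D, Dset D -> forall X Y, Xset i X -> Xset i Y ->
      nrm (vsub (gradX i D X) (gradX i D Y)) <= LX i D * nrm (vsub X Y))
  (HLcont : forall i, cont_on Dset (LX i))
  (* (A3) *)
  (HDsub : forall D, Dset D -> Oset D) (HXsub : forall i X, Xset i X -> Oi i X)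
  (HDne : exists D, Dset D) (HDcomp : vcompact_set Dset) (HDconv : vconvex_set Dset)
  (HXne : forall i, exists X, Xset i X) (HXclosed : forall i, vclosed_set (Xset i))
  (HXconv : forall i, vconvex_set (Xset i))
  (* (A4) *)
  (HGconv : convex_on Oset G)
  (* (A5) *)
  (HA5 : forall i, (vcompact_set (Xset i) /\ convex_on (Oi i) (g i)) \/
                   (exists mu, 0 < mu /\ strongly_convex_on (Oi i) mu (g i)))
  (* network: (j, i) in E nu  iff  E nu j i  (link from j to i) *)
  (E : nat -> 'I_I -> 'I_I -> bool) (B : nat)
  (HB : (0 < B)%nat)
  (HBconn : forall k : nat, strongly_connected
      (fun u v : 'I_I => exists t : nat,
          (k * B <= t)%nat /\ (t <= (k + 1) * B - 1)%nat /\ E t u v))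
  (A : nat -> 'I_I -> 'I_I -> R) (kappa : R) (Hkappa : 0 < kappa)
  (HAdiag : forall nu i, kappa <= A nu i i)
  (HAedge : forall nu i j, j <> i -> E nu j i -> kappa <= A nu i j)
  (HAnon : forall nu i j, j <> i -> ~ E nu j i -> A nu i j = 0)
  (HAcol : forall nu j, \big[Rplus/R0]_(i : 'I_I) A nu i j = 1)
  (* surrogates (S), parameters (T1) and step sizes *)
  (selD selX : 'I_I -> bool)
  (tauD tauX : nat -> 'I_I -> R) (eps : R) (gamma : nat -> R)
  (HtauDpos : forall nu i, 0 < tauD nu i) (HtauXpos : forall nu i, 0 < tauX nu i)
  (HtauDbnd : forall i, exists a b, 0 < a /\ forall nu, a <= tauD nu i <= b)
  (HtauXbnd : forall i, exists b, forall nu, tauX nu i <= b)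
  (Heps : 0 < eps)
  (phi : nat -> 'I_I -> R)
  (D Dt U Th : nat -> 'I_I -> Mat M K)
  (X : nat -> forall i : 'I_I, Mat K (n i))
  (HtauXL : forall nu i, (1 <= nu)%nat -> LX i (U nu i) / 2 + eps <= tauX nu i)
  (Hgamma : forall nu, 0 < gamma nu <= 1)
  (Hgdiv : cv_infty (fun N => sum_f_R0 gamma N))
  (Hgsq : exists l, Un_cv (fun N => sum_f_R0 (fun k => gamma k ^ 2) N) l)
  (Hphi0 : forall i, phi 0%nat i = 1)
  (HD0 : forall i, Dset (D 0%nat i)) (HX0 : forall i, Xset i (X 0%nat i))
  (HTh0 : forall i, Th 0%nat i = gradD i (D 0%nat i) (X 0%nat i))
  (HDt : forall nu i, is_argmin Dset
      (fun Z => (if selD i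
                 then f i Z (X nu i) + tauD nu i / 2 * nrm (vsub Z (D nu i)) ^ 2
                 else ip (gradD i (D nu i) (X nu i)) (vsub Z (D nu i))
                      + tauD nu i / 2 * nrm (vsub Z (D nu i)) ^ 2)
                + ip (vsub (vscal (INR I) (Th nu i)) (gradD i (D nu i) (X nu i)))
                     (vsub Z (D nu i))
                + G Z)
      (Dt nu i))
  (HU : forall nu i, U nu i = vadd (D nu i) (vscal (gamma nu) (vsub (Dt nu i) (D nu i))))
  (HX : forall nu i, is_argmin (Xset i)
      (fun Y => (if selX i
                 then f i (U nu i) Y + tauX nu i / 2 * nrm (vsub Y (X nu i)) ^ 2
                 else ip (gradX i (U nu i) (X nu i)) (vsub Y (X nu i))
                      + tauX nu i / 2 * nrm (vsub Y (X nu i)) ^ 2)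
                + g i Y)
      (X nu.+1 i))
  (Hphi : forall nu i, phi nu.+1 i =
      \big[Rplus/R0]_(j | E nu j i || (j == i)) (A nu i j * phi nu j))
  (HD : forall nu i, D nu.+1 i =
      vscal (/ phi nu.+1 i)
        (vsum (fun j => E nu j i || (j == i)) (fun j => vscal (A nu i j * phi nu j) (U nu j))))
  (HTh : forall nu i, Th nu.+1 i =
      vadd (vscal (/ phi nu.+1 i)
              (vsum (fun j => E nu j i || (j == i))
                    (fun j => vscal (A nu i j * phi nu j) (Th nu j))))
           (vscal (/ phi nu.+1 i)
              (vsub (gradD i (D nu.+1 i) (X nu.+1 i)) (gradD i (D nu i) (X nu i)))))
  : Un_cv (fun nu => nrm (vsub (stack (D nu)) (kron1 (wavg (phi nu) (D nu))))) 0
    /\ (exists l, Un_cv (fun N => sum_f_R0 (fun t =>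
           nrm (vsub (stack (D t.+1)) (kron1 (wavg (phi t.+1) (D t.+1)))) ^ 2) N) l)
    /\ (exists l, Un_cv (fun N => sum_f_R0 (fun t =>
           nrm (vsub (stack (U t.+1)) (kron1 (wavg (phi t.+1) (U t.+1)))) ^ 2) N) l).
Proof.
have [C DsetC] := vcompact_coord_bounded (Ordinal HM, Ordinal HK) HDcomp.
apply: (dictionary_consensus Hkappa HAdiag HAedge HAnon HAcol HB HBconn Hphi0 Hphi
  (Ordinal HI) Hgamma Hgsq _ _ HU HD) => [i p | nu i p]; apply: DsetC.
  exact: HD0.
exact: (proj1 (HDt nu i)).
Qed.
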